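(* Let $\mathcal W$ be a differentially connected covering equation of the Gibbons–Tsarev equation, with total derivatives $\tilde D_x,\tilde D_y$ (differentially connected: every smooth function $h$ on $\mathcal W$ with $\tilde D_x h=\tilde D_y h=0$ is constant). Let $\psi^{(k)}$, $\varphi^{(k)}$ ($k\ge1$) be smooth functions on $\mathcal W$ and consider the formal series $$\psi(\lambda)=\lambda+\sum_{k\ge1}\psi^{(k)}\lambda^{-k},\qquad \varphi(\lambda)=\frac1\lambda+\sum_{k\ge1}\varphi^{(k)}\lambda^k .$$ Consider the conditions: (1) $\tilde D_x\psi=\dfrac{\psi'}{\lambda^2-z_x\lambda-z_y}$ and $\tilde D_y\psi=\dfrac{(\lambda-z_x)\psi'}{\lambda^2-z_x\lambda-z_y}$ (as series in $\lambda^{-1}$, $\psi'=d\psi/d\lambda$); (2) $\tilde D_x\varphi=-\dfrac1{\varphi^2-z_x\varphi-z_y}$ and $\tilde D_y\varphi=-\dfrac{\varphi-z_x}{\varphi^2-z_x\varphi-z_y}$ (as series in $\lambda$); (3) every coefficient of the Laurent series $\psi(\varphi(\lambda))$ in $\lambda$ is a constant, i.e. $\psi(\varphi(\lambda))=c(\lambda)$ with $c$ independent of the point of $\mathcal W$. Then any two of the conditions (1), (2), (3) imply the remaining one.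
   Context: The Gibbons–Tsarev equation is $z_{yy}+z_xz_{xy}-z_yz_{xx}+1=0$; $z_x,z_y$ are regarded as functions on $\mathcal W$ via the covering projection. $\tilde D_x,\tilde D_y$ act on formal series coefficientwise. The composition $\psi(\varphi(\lambda))=\varphi(\lambda)+\sum_{k\ge1}\psi^{(k)}\varphi(\lambda)^{-k}$ is a well-defined formal Laurent series in $\lambda$ since $1/\varphi(\lambda)$ is a power series in $\lambda$ without constant term; $\psi'(\varphi)$ likewise denotes the composition of $\psi'$ with $\varphi$. *)

From mathcomp Require Import all_boot all_algebra.
From mathcomp Require Import functions reals.
Set Implicit Arguments. Unset Strict Implicit. Unset Printing Implicit Defensive.
Import GRing.Theory Num.Theory.
Local Open Scope ring_scope.

Section Series.
Variable K : comPzRingType.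

Definition ps1 : nat -> K := fun n => if n == 0%N then 1 else 0.
Definition psmul (f g : nat -> K) : nat -> K :=
  fun n => \sum_(i < n.+1) f i * g (n - i)%N.
Definition pspow (f : nat -> K) (j : nat) : nat -> K := iter j (psmul f) ps1.
(* inverse of the power series 1 + u, where u has no constant term:
   (1 + u)^-1 = sum_j (-u)^j, the sum being finite coefficientwise *)
Definition psinv1 (u : nat -> K) : nat -> K :=
  fun n => \sum_(j < n.+1) pspow (fun i => - u i) j n.

(* Formal Laurent series  sum_{k>=0} lcoef k * X^(lval + k)           *)
Record lser := LS { lval : int; lcoef : nat -> K }.

Definition coef (s : lser) (n : int) : K :=
  match (n - lval s)%R with Posz k => lcoef s k | Negz _ => 0 end.

Definition lseq (s t : lser) : Prop := forall n : int, coef s n = coef t n.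

Definition lconst (a : K) : lser := LS 0 (fun k => if k == 0%N then a else 0).
Definition lX (m : int) : lser := LS m ps1.
Definition ladd (s t : lser) : lser :=
  let v := if lval s <= lval t then lval s else lval t in
  LS v (fun k => coef s (v + k%:Z) + coef t (v + k%:Z)).
Definition lopp (s : lser) : lser := LS (lval s) (fun k => - lcoef s k).
Definition lsub (s t : lser) : lser := ladd s (lopp t).
Definition lscale (a : K) (s : lser) : lser := LS (lval s) (fun k => a * lcoef s k).
Definition lmul (s t : lser) : lser := LS (lval s + lval t) (psmul (lcoef s) (lcoef t)).
Definition lone : lser := lX 0.
Definition lpow (s : lser) (n : nat) : lser := iter n (lmul s) lone.
(* multiplicative inverse of a Laurent series whose leading coefficient
   (lcoef s 0) equals 1; only used on such series *)
Definition linv_monic (s : lser) : lser :=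
  LS (- lval s) (psinv1 (fun k => if k == 0%N then 0 else lcoef s k)).
Definition lpowz (s : lser) (m : int) : lser :=
  match m with Posz n => lpow s n | Negz n => lpow (linv_monic s) n.+1 end.
Definition lder (s : lser) : lser :=
  LS (lval s - 1) (fun k => lcoef s k *~ (lval s + k%:Z)).
(* composition f(g) = sum_k lcoef f k * g^(lval f + k), for g with
   valuation 1 and leading coefficient 1 (so that negative powers of g
   make sense and the sum is finite coefficientwise) *)
Definition lcomp (f g : lser) : lser :=
  LS (lval f) (fun j => \sum_(k < j.+1)
         lcoef f k * coef (lpowz g (lval f + k%:Z)) (lval f + j%:Z)).
End Series.

Definition lmapc (K L : comPzRingType) (D : K -> L) (s : lser K) : lser L :=
  LS (lval s) (fun k => D (lcoef s k)).

(*   z_yy + z_x z_xy - z_y z_xx + 1 = 0                               *)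
(* The covering equation W is represented by its algebra of smooth     *)
(* functions (a predicate [smooth] on W -> R) and its total derivatives *)
(* Dx, Dy: commuting derivations of the smooth functions, killing       *)
(* constants; z, z_x, z_y are functions on W (pulled back along the     *)
(* covering projection) with Dx z = z_x, Dy z = z_y, and the GT relation *)
(* holds with z_xx = Dx z_x, z_xy = Dx z_y (= Dy z_x), z_yy = Dy z_y.   *)
Definition is_derivation (R : realType) (W : Type)
    (smooth : (W -> R) -> Prop) (D : (W -> R) -> (W -> R)) : Prop :=
  [/\ forall f, smooth f -> smooth (D f),
      forall c : R, D (fun _ => c) = 0,
      forall f g, smooth f -> smooth g -> D (f + g) = D f + D g &
      forall f g, smooth f -> smooth g -> D (f * g) = D f * g + f * D g].

Definition GT_covering (R : realType) (W : Type)
    (smooth : (W -> R) -> Prop) (Dx Dy : (W -> R) -> (W -> R))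
    (z zx zy : W -> R) : Prop :=
  [/\ (forall c : R, smooth (fun _ => c)),
      (forall f g, smooth f -> smooth g ->
          [/\ smooth (f + g), smooth (- f) & smooth (f * g)]),
      is_derivation smooth Dx /\ is_derivation smooth Dy,
      (forall f, smooth f -> Dx (Dy f) = Dy (Dx f)) &
      [/\ smooth z, smooth zx, smooth zy,
          Dx z = zx /\ Dy z = zy &
          Dy zy + zx * Dx zy - zy * Dx zx + 1 = 0]].

Definition diff_connected (R : realType) (W : Type)
    (smooth : (W -> R) -> Prop) (Dx Dy : (W -> R) -> (W -> R)) : Prop :=
  forall h, smooth h -> Dx h = 0 -> Dy h = 0 -> exists c : R, h = (fun _ => c).

Definition shape (R : realType) (W : Type) (a : nat -> W -> R) : nat -> (W -> R) :=
  fun j => match j with 0%N => 1 | 1%N => 0 | S k => a k end.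

(* psi(lambda) = lambda + sum_{k>=1} psi^(k) lambda^-k, written as a
   Laurent series in X = lambda^-1 :  X^-1 + sum_{k>=1} psi^(k) X^k *)
Definition psiS (R : realType) (W : Type) (psi : nat -> W -> R) : lser (W -> R) :=
  LS (-1) (shape psi).
(* phi(lambda) = 1/lambda + sum_{k>=1} phi^(k) lambda^k, a Laurent series
   in X = lambda *)
Definition phiS (R : realType) (W : Type) (phi : nat -> W -> R) : lser (W -> R) :=
  LS (-1) (shape phi).

(* d/dlambda of a series in X = lambda^-1 :  d/dlambda = - X^2 d/dX *)
Definition dlam (K : comPzRingType) (s : lser K) : lser K :=
  lopp (lmul (lX K 2) (lder s)).

Section Conditions.
Variables (R : realType) (W : Type) (Dx Dy : (W -> R) -> (W -> R)) (zx zy : W -> R).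

(* condition (1), series in X = lambda^-1;
   lambda^2 - z_x lambda - z_y = X^-2 - z_x X^-1 - z_y *)
Definition cond1 (psi : nat -> W -> R) : Prop :=
  let den := ladd (lX _ (-2)) (ladd (lscale (- zx) (lX _ (-1))) (lconst (- zy))) in
  let dpsi := dlam (psiS psi) in
  lseq (lmapc Dx (psiS psi)) (lmul dpsi (linv_monic den)) /\
  lseq (lmapc Dy (psiS psi))
       (lmul (lmul (lsub (lX _ (-1)) (lconst zx)) dpsi) (linv_monic den)).

Definition cond2 (phi : nat -> W -> R) : Prop :=
  let p := phiS phi in
  let den := ladd (lmul p p) (ladd (lscale (- zx) p) (lconst (- zy))) in
  lseq (lmapc Dx p) (lopp (linv_monic den)) /\
  lseq (lmapc Dy p) (lopp (lmul (lsub p (lconst zx)) (linv_monic den))).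

(* condition (3): psi(phi(lambda)) = psi^(X := 1/phi(lambda)) has constant
   coefficients *)
Definition cond3 (psi phi : nat -> W -> R) : Prop :=
  forall n : int, exists c : R,
    coef (lcomp (psiS psi) (linv_monic (phiS phi))) n = (fun _ => c).
End Conditions.

From HB Require Import structures.
From mathcomp Require Import all_boot all_algebra.
From mathcomp Require Import boolp classical_sets functions reals.
From mathcomp Require Import ring zify.
Set Implicit Arguments. Unset Strict Implicit. Unset Printing Implicit Defensive.
Import GRing.Theory Num.Theory.
Local Open Scope ring_scope.

(* Write phi = X^-1 a as a series in X = lambda and psi = X^-1 b as a series in
   X = 1/lambda, so that g = X a^-1 is 1/phi and C = a b(g) is lambda psi(phi).
   For a total derivative D, clearing denominators turns condition (1) into
   E1 := d Db - r1 (b - X b') = 0, condition (2) into E2 := e Da + r2 = 0, and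
   condition (3) into DC = 0 (the converse by differential connectedness).
   Differentiating a^-1 C = b(g) by the chain rule, with D(a^-1) = -a^-2 Da,
   gives the identity
     d(g) a^-2 DC = a^-1 E1(g) + a^-4 (b(g) - g b'(g)) E2,
   whose three coefficients are invertible power series, and E1 = 0 iff
   E1(g) = 0.  Hence any two of E1 = 0, E2 = 0, DC = 0 imply the third. *)

(** * Formal power series *)

Section PowerSeries.
Variable K : comNzRingType.

Record fps := FPS { fcoef : nat -> K }.

HB.instance Definition _ := gen_eqMixin fps.
HB.instance Definition _ := gen_choiceMixin fps.

Lemma fps_ext (f g : fps) : (forall n, fcoef f n = fcoef g n) -> f = g.
Proof. by case: f; case: g => g f /= fg; congr FPS; exact: funext. Qed.

Definition fadd (f g : fps) := FPS (fun n => fcoef f n + fcoef g n).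
Definition fopp (f : fps) := FPS (fun n => - fcoef f n).
Definition fzero := FPS (fun _ => 0).

Lemma faddA : associative fadd.
Proof. by move=> f g h; apply: fps_ext => n /=; rewrite addrA. Qed.
Lemma faddC : commutative fadd.
Proof. by move=> f g; apply: fps_ext => n /=; rewrite addrC. Qed.
Lemma fadd0 : left_id fzero fadd.
Proof. by move=> f; apply: fps_ext => n /=; rewrite add0r. Qed.
Lemma faddN : left_inverse fzero fopp fadd.
Proof. by move=> f; apply: fps_ext => n /=; rewrite addNr. Qed.

HB.instance Definition _ := GRing.isZmodule.Build fps faddA faddC fadd0 faddN.

Definition fone := FPS (ps1 K).
Definition fmul (f g : fps) := FPS (psmul (fcoef f) (fcoef g)).

(* The ring laws of [fmul] are inherited from {poly K} through truncations. *)
Definition ptrunc (N : nat) (f : nat -> K) : {poly K} := \poly_(i < N) f i.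

Lemma psmul_ptrunc N f g n :
  (n < N)%N -> psmul f g n = (ptrunc N f * ptrunc N g)`_n.
Proof.
move=> nN; rewrite coefM /psmul; apply: eq_bigr => i _.
rewrite !coef_poly (leq_ltn_trans (leq_subr _ _) nN).
by rewrite (leq_ltn_trans _ nN) // -ltnS.
Qed.

Lemma coefM_eqr (p q q' : {poly K}) n :
  (forall i, (i <= n)%N -> q`_i = q'`_i) -> (p * q)`_n = (p * q')`_n.
Proof. by move=> qq'; rewrite !coefM; apply: eq_bigr => i _; rewrite qq' // leq_subr. Qed.

Lemma coef_ptrunc_psmul f g n i : (i <= n)%N ->
  (ptrunc n.+1 (psmul f g))`_i = (ptrunc n.+1 f * ptrunc n.+1 g)`_i.
Proof. by move=> ni; rewrite coef_poly ltnS ni (psmul_ptrunc (N := n.+1) _ _ ni). Qed.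

Lemma fmulC : commutative fmul.
Proof.
by move=> f g; apply: fps_ext => n /=; rewrite !(psmul_ptrunc _ _ (ltnSn n)) mulrC.
Qed.

Lemma fmulA : associative fmul.
Proof.
move=> f g h; apply: fps_ext => n /=; rewrite !(psmul_ptrunc _ _ (ltnSn n)).
rewrite (coefM_eqr _ (@coef_ptrunc_psmul (fcoef g) (fcoef h) n)).
rewrite [in RHS]mulrC (coefM_eqr _ (@coef_ptrunc_psmul (fcoef f) (fcoef g) n)).
by rewrite mulrA [in RHS]mulrC.
Qed.

Lemma fmul1 : left_id fone fmul.
Proof.
move=> f; apply: fps_ext => n /=; rewrite /psmul big_ord_recl /ps1 /= mul1r subn0.
by rewrite big1 ?addr0 // => i _; rewrite mul0r.
Qed.

Lemma fmulDl : left_distributive fmul fadd.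
Proof.
move=> f g h; apply: fps_ext => n /=; rewrite /psmul -big_split /=.
by apply: eq_bigr => i _; rewrite mulrDl.
Qed.

Lemma fone_neq0 : fone != fzero.
Proof. by apply/eqP => /(congr1 (fcoef^~ 0%N)) /= /eqP; rewrite /ps1 /= oner_eq0. Qed.

HB.instance Definition _ :=
  GRing.Zmodule_isComNzRing.Build fps fmulA fmulC fmul1 fmulDl fone_neq0.

Lemma fcoefD f g n : fcoef (f + g) n = fcoef f n + fcoef g n. Proof. by []. Qed.
Lemma fcoefN f n : fcoef (- f) n = - fcoef f n. Proof. by []. Qed.
Lemma fcoefB f g n : fcoef (f - g) n = fcoef f n - fcoef g n. Proof. by []. Qed.
Lemma fcoef1 n : fcoef 1 n = (n == 0%N)%:R.
Proof. by rewrite /= /ps1; case: (n == 0%N). Qed.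
Lemma fcoefM f g n : fcoef (f * g) n = \sum_(i < n.+1) fcoef f i * fcoef g (n - i).
Proof. by []. Qed.

Lemma fcoef0M f g : fcoef (f * g) 0%N = fcoef f 0%N * fcoef g 0%N.
Proof. by rewrite fcoefM big_ord1. Qed.

Lemma fcoef0X f n : fcoef (f ^+ n) 0%N = fcoef f 0%N ^+ n.
Proof. by elim: n => [|n IH]; rewrite ?expr0 ?fcoef1 // !exprS fcoef0M IH. Qed.

Lemma fcoef_sum I (r : seq I) (P : pred I) (F : I -> fps) n :
  fcoef (\sum_(i <- r | P i) F i) n = \sum_(i <- r | P i) fcoef (F i) n.
Proof.
elim: r => [|x r IH]; first by rewrite !big_nil.
by rewrite !big_cons; case: (P x); rewrite ?fcoefD IH.
Qed.

Lemma fcoefM_eqr (h f f' : fps) n :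
  (forall i, (i <= n)%N -> fcoef f i = fcoef f' i) -> fcoef (h * f) n = fcoef (h * f') n.
Proof. by move=> ff'; rewrite !fcoefM; apply: eq_bigr => i _; rewrite ff' // leq_subr. Qed.

Lemma fcoefM_eql (h f f' : fps) n :
  (forall i, (i <= n)%N -> fcoef f i = fcoef f' i) -> fcoef (f * h) n = fcoef (f' * h) n.
Proof. by move=> ff'; rewrite ![_ * h]mulrC; exact: fcoefM_eqr. Qed.

Definition fC (c : K) := FPS (fun n => if n == 0%N then c else 0).
Definition fX := FPS (fun n => (n == 1%N)%:R).

Lemma fC0 : fC 0 = 0. Proof. by apply: fps_ext => -[|n]. Qed.
Lemma fC1 : fC 1 = 1. Proof. by apply: fps_ext => -[|n]. Qed.
Lemma fCD a b : fC (a + b) = fC a + fC b.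
Proof. by apply: fps_ext => -[|n] /=; rewrite ?addr0. Qed.
Lemma fCN a : fC (- a) = - fC a.
Proof. by apply: fps_ext => -[|n] /=; rewrite ?oppr0. Qed.

Lemma fcoefCM c f n : fcoef (fC c * f) n = c * fcoef f n.
Proof. by rewrite fcoefM big_ord_recl /= subn0 big1 ?addr0 // => i _; rewrite mul0r. Qed.

Lemma fCM a b : fC (a * b) = fC a * fC b.
Proof. by apply: fps_ext => n; rewrite fcoefCM /=; case: (n == 0%N); rewrite ?mulr0. Qed.
Lemma fCMn a m : fC (a *+ m) = fC a *+ m.
Proof. by elim: m => [|m IH]; rewrite ?mulr0n ?fC0 // !mulrS fCD IH. Qed.
Lemma fC_sum I (r : seq I) (P : pred I) (F : I -> K) :
  fC (\sum_(i <- r | P i) F i) = \sum_(i <- r | P i) fC (F i).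
Proof.
elim: r => [|x r IH]; first by rewrite !big_nil fC0.
by rewrite !big_cons; case: (P x); rewrite ?fCD IH.
Qed.

Lemma fcoefXM f n : fcoef (fX * f) n = if n is m.+1 then fcoef f m else 0.
Proof.
rewrite fcoefM; case: n => [|n]; first by rewrite big_ord1 mul0r.
rewrite !big_ord_recl /= mul0r add0r mul1r subSS subn0.
by rewrite big1 ?addr0 // => i _; rewrite mul0r.
Qed.

Lemma fcoefXnM k f n :
  fcoef (fX ^+ k * f) n = if (k <= n)%N then fcoef f (n - k) else 0.
Proof.
elim: k n => [|k IH] n; first by rewrite expr0 mul1r subn0.
rewrite exprSr (mulrC _ fX) -mulrA fcoefXM.
by case: n => [|n] //; rewrite IH ltnS subSS.
Qed.

Lemma fcoefXn k n : fcoef (fX ^+ k) n = (n == k)%:R.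
Proof.
rewrite -[fX ^+ k]mulr1 fcoefXnM fcoef1; case: (leqP k n) => kn.
  by rewrite subn_eq0 eqn_leq kn andbT.
by rewrite (ltn_eqF kn).
Qed.

Lemma big_ord_trunc (F : nat -> K) a b : (a <= b)%N ->
  (forall j, (a <= j < b)%N -> F j = 0) -> \sum_(j < b) F j = \sum_(j < a) F j.
Proof.
move=> ab F0; rewrite -!(big_mkord xpredT) (big_cat_nat (leq0n a) ab) /=.
by rewrite [X in _ + X]big1_seq ?addr0 // => j /andP[_]; rewrite mem_index_iota; apply: F0.
Qed.

Section Order.
Variable g : fps.
Hypothesis g0 : fcoef g 0%N = 0.

Lemma fcoefM_pow_small c j n : (n < j)%N -> fcoef (c * g ^+ j) n = 0.
Proof.
elim: j c n => [|j IH] c n // nj.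
rewrite exprS mulrCA fcoefM big1 // => -[[|i] Hi] _; first by rewrite g0 mul0r.
by rewrite IH ?mulr0 //=; lia.
Qed.

Lemma fcoef_pow_small k n : (n < k)%N -> fcoef (g ^+ k) n = 0.
Proof. by move=> nk; rewrite -[g ^+ k]mul1r fcoefM_pow_small. Qed.

Lemma fcoef_pow_diag k : fcoef g 1%N = 1 -> fcoef (g ^+ k) k = 1.
Proof.
move=> g1; elim: k => [|k IH]; first by rewrite expr0 fcoef1.
rewrite exprS fcoefM !big_ord_recl /= g0 mul0r add0r g1 mul1r subSS subn0 IH.
by rewrite big1 ?addr0 // => i _; rewrite fcoef_pow_small ?mulr0 // /bump /=; have := ltn_ord i; lia.
Qed.

End Order.

(* [finv f] replaces the constant coefficient of [f] by 1 before inverting. *)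
Definition finv (f : fps) := FPS (psinv1 (fun k => if k == 0%N then 0 else fcoef f k)).

Lemma pspowE (u : nat -> K) j : pspow u j = fcoef (FPS u ^+ j).
Proof. by elim: j => [|j IH] //=; rewrite exprS /= IH. Qed.

Lemma fcoef_finv0 f : fcoef (finv f) 0%N = 1.
Proof. by rewrite /= /psinv1 big_ord1. Qed.

Lemma mulr_finv (f : fps) : fcoef f 0%N = 1 -> f * finv f = 1.
Proof.
move=> f0; set u := FPS (fun k => - if k == 0%N then 0 else fcoef f k).
have fE : f = 1 - u.
  by apply: fps_ext => -[|n]; rewrite fcoefB fcoef1 /= ?f0 ?oppr0 ?addr0 // opprK add0r.
have u0 : fcoef u 0%N = 0 by rewrite /= oppr0.
apply: fps_ext => n; rewrite (fcoefM_eqr _ (f' := \sum_(j < n.+1) u ^+ j)); last first.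
  move=> i ni; rewrite /= /psinv1 fcoef_sum.
  rewrite [RHS](@big_ord_trunc (fun j => fcoef (u ^+ j) i) i.+1) //; last first.
    by move=> j /andP[ij _]; rewrite fcoef_pow_small.
  by apply: eq_bigr => j _; rewrite pspowE.
by rewrite fE -opprB mulNr -subrX1 opprB fcoefB fcoef_pow_small // subr0.
Qed.

Lemma fcoef0_cancel u x : fcoef u 0%N = 1 -> u * x = 0 -> x = 0.
Proof.
by move=> u0 ux0; rewrite -[x]mul1r -(mulr_finv u0) mulrAC ux0 mul0r.
Qed.

Lemma two_of_three_fcoef0 (u1 u2 u3 x1 x2 x3 : fps) :
  fcoef u1 0%N = 1 -> fcoef u2 0%N = 1 -> fcoef u3 0%N = 1 ->
  u3 * x3 = u1 * x1 + u2 * x2 ->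
  [/\ x1 = 0 -> x2 = 0 -> x3 = 0, x1 = 0 -> x3 = 0 -> x2 = 0
    & x2 = 0 -> x3 = 0 -> x1 = 0].
Proof.
move=> u10 u20 u30 ux; split=> [x10 x20|x10 x30|x20 x30].
- by apply: (fcoef0_cancel u30); rewrite ux x10 x20 !mulr0 addr0.
- by apply: (fcoef0_cancel u20); move: ux; rewrite x10 x30 !mulr0 add0r.
- by apply: (fcoef0_cancel u10); move: ux; rewrite x20 x30 !mulr0 addr0.
Qed.

Lemma eq_mul_finv e x y : fcoef e 0%N = 1 -> x = y * finv e <-> e * x - y = 0.
Proof.
move=> e0; split=> [->|/eqP]; first by rewrite mulrCA mulr_finv ?mulr1 ?subrr.
by rewrite subr_eq0 => /eqP <-; rewrite mulrAC mulr_finv ?mul1r.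
Qed.

Lemma finvK f : fcoef f 0%N = 1 -> finv (finv f) = f.
Proof.
move=> f0; rewrite -[finv (finv f)]mul1r -(mulr_finv f0) -mulrA.
by rewrite mulr_finv ?fcoef_finv0 ?mulr1.
Qed.

(* Meaningful only when [g] has no constant term. *)
Definition fcomp (f g : fps) :=
  FPS (fun n => \sum_(k < n.+1) fcoef f k * fcoef (g ^+ k) n).

Definition fpoly (N : nat) (f : fps) : {poly fps} := \poly_(k < N) fC (fcoef f k).

Section Composition.
Variable g : fps.
Hypothesis g0 : fcoef g 0%N = 0.

Lemma fcoef_horner (q : {poly fps}) n :
  fcoef q.[g] n = \sum_(k < n.+1) fcoef (q`_k * g ^+ k) n.
Proof.
rewrite (@horner_coef_wide _ (maxn (size q) n.+1)) ?leq_maxl // fcoef_sum.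
rewrite [LHS](@big_ord_trunc (fun j => fcoef (q`_j * g ^+ j) n) n.+1) ?leq_maxr //.
by move=> j /andP[nj _]; rewrite fcoefM_pow_small.
Qed.

Lemma fcoef_horner_fcomp (q : {poly fps}) f n :
  (forall k, (k <= n)%N -> q`_k = fC (fcoef f k)) ->
  fcoef q.[g] n = fcoef (fcomp f g) n.
Proof.
move=> qf; rewrite fcoef_horner; apply: eq_bigr => k _.
by rewrite qf ?fcoefCM // -ltnS.
Qed.

Lemma fcoef_fpoly_fcomp f N n :
  (n < N)%N -> fcoef (fpoly N f).[g] n = fcoef (fcomp f g) n.
Proof. by move=> nN; apply: fcoef_horner_fcomp => k kn; rewrite coef_poly ifT //; lia. Qed.

Lemma fcompM f f' : fcomp (f * f') g = fcomp f g * fcomp f' g.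
Proof.
apply: fps_ext => n.
rewrite -(@fcoef_horner_fcomp (fpoly n.+1 f * fpoly n.+1 f')); last first.
  move=> k kn; rewrite coefM fcoefM fC_sum; apply: eq_bigr => i _.
  by rewrite fCM !coef_poly !ifT //; have := ltn_ord i; lia.
rewrite hornerM (fcoefM_eql _ (f' := fcomp f g)) => [|i ni]; last exact: fcoef_fpoly_fcomp.
by rewrite (fcoefM_eqr _ (f' := fcomp f' g)) // => i ni; exact: fcoef_fpoly_fcomp.
Qed.

Lemma fcompD f f' : fcomp (f + f') g = fcomp f g + fcomp f' g.
Proof.
by apply: fps_ext => n; rewrite fcoefD /= -big_split; apply: eq_bigr => k _; rewrite mulrDl.
Qed.

Lemma fcompN f : fcomp (- f) g = - fcomp f g.
Proof. by apply: fps_ext => n; rewrite fcoefN /= -sumrN; apply: eq_bigr => k _; rewrite mulNr. Qed.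

Lemma fcompB f f' : fcomp (f - f') g = fcomp f g - fcomp f' g.
Proof. by rewrite fcompD fcompN. Qed.

Lemma fcompC c : fcomp (fC c) g = fC c.
Proof.
apply: fps_ext => n; rewrite [LHS]/= big_ord_recl big1 => [|i _]; last by rewrite mul0r.
by rewrite expr0 fcoef1 addr0; case: n => [|n]; rewrite /= ?mulr1 ?mulr0.
Qed.

Lemma fcomp1 : fcomp 1 g = 1.
Proof. by rewrite -fC1 fcompC. Qed.

Lemma fcomp0 : fcomp 0 g = 0.
Proof. by rewrite -fC0 fcompC. Qed.

Lemma fcompX : fcomp fX g = g.
Proof.
apply: fps_ext => -[|n] /=; first by rewrite big_ord1 mul0r g0.
rewrite !big_ord_recl /= mul0r add0r mul1r expr1 big1 ?addr0 // => i _.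
by rewrite mul0r.
Qed.

Lemma fcompXn k : fcomp (fX ^+ k) g = g ^+ k.
Proof. by elim: k => [|k IH]; rewrite ?fcomp1 // !exprS fcompM fcompX IH. Qed.

Lemma fcoef_fcomp0 f : fcoef (fcomp f g) 0%N = fcoef f 0%N.
Proof. by rewrite /= big_ord1 expr0 fcoef1 mulr1. Qed.

Lemma fcomp_eq0 f : fcoef g 1%N = 1 -> fcomp f g = 0 -> f = 0.
Proof.
move=> g1 fg0; apply: fps_ext; elim/ltn_ind => n IH.
have := congr1 (fcoef^~ n) fg0; rewrite /= big_ord_recr /= fcoef_pow_diag // mulr1.
by rewrite big1 ?add0r // => k _; rewrite IH ?mul0r.
Qed.

End Composition.

Definition fderiv (f : fps) := FPS (fun k => fcoef f k.+1 *+ k.+1).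

Definition fshift (f : fps) := FPS (fun k => fcoef f k.+1).

Lemma fshiftE (f : fps) : f = fC (fcoef f 0%N) + fX * fshift f.
Proof. by apply: fps_ext => -[|n]; rewrite fcoefD fcoefXM /= ?addr0 ?add0r. Qed.

(* If phi = X^-1 a and psi = X^-1 b, then X psi(phi) = comp_series a b. *)
Definition comp_series (a b : fps) := a * fcomp b (fX * finv a).

End PowerSeries.

(** * Derivations acting on coefficients *)

Section Derivation.
Variables (K : comNzRingType) (S : K -> Prop) (D : K -> K).
Hypothesis S1 : S 1.
Hypothesis SD : forall x y, S x -> S y -> S (x + y).
Hypothesis SN : forall x, S x -> S (- x).
Hypothesis SM : forall x y, S x -> S y -> S (x * y).
Hypothesis DD : forall x y, S x -> S y -> D (x + y) = D x + D y.
Hypothesis DM : forall x y, S x -> S y -> D (x * y) = D x * y + x * D y.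

Let S0 : S 0. Proof. by rewrite -(subrr 1); apply/SD/SN. Qed.

Let D0 : D 0 = 0.
Proof. by apply: (@addrI _ (D 0)); rewrite addr0 -DD // addr0. Qed.

Let D1 : D 1 = 0.
Proof. by apply: (@addrI _ (D 1)); rewrite addr0 -{3}[1]mulr1 DM // mulr1 mul1r. Qed.

Lemma S_sum I (r : seq I) (P : pred I) (F : I -> K) :
  (forall i, P i -> S (F i)) -> S (\sum_(i <- r | P i) F i).
Proof.
move=> SF; elim: r => [|x r IH]; first by rewrite big_nil.
by rewrite big_cons; case: ifP => Px //; apply: SD => //; apply: SF.
Qed.

Lemma D_sum I (r : seq I) (P : pred I) (F : I -> K) :
  (forall i, P i -> S (F i)) -> D (\sum_(i <- r | P i) F i) = \sum_(i <- r | P i) D (F i).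
Proof.
move=> SF; elim: r => [|x r IH]; first by rewrite !big_nil.
rewrite !big_cons; case: ifP => Px //.
by rewrite DD ?IH //; [apply: SF | apply: S_sum].
Qed.

Definition fsmooth (f : fps K) := forall n, S (fcoef f n).

Lemma fsmooth0 : fsmooth 0. Proof. by []. Qed.
Lemma fsmooth1 : fsmooth 1. Proof. by move=> n; rewrite fcoef1; case: (n == 0%N). Qed.
Lemma fsmoothC c : S c -> fsmooth (fC c). Proof. by move=> Sc [|n]. Qed.
Lemma fsmoothX : fsmooth (fX K). Proof. by move=> [|[|n]]. Qed.
Lemma fsmoothM f g : fsmooth f -> fsmooth g -> fsmooth (f * g).
Proof. by move=> Sf Sg n; rewrite fcoefM; apply: S_sum => i _; apply: SM. Qed.
Lemma fsmoothXn f k : fsmooth f -> fsmooth (f ^+ k).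
Proof.
by move=> Sf; elim: k => [|k IH]; [rewrite expr0; exact: fsmooth1 | rewrite exprS; exact: fsmoothM].
Qed.
Lemma fsmooth_sum I (r : seq I) (P : pred I) (F : I -> fps K) :
  (forall i, P i -> fsmooth (F i)) -> fsmooth (\sum_(i <- r | P i) F i).
Proof. by move=> SF n; rewrite fcoef_sum; apply: S_sum => i Pi; apply: SF. Qed.

Lemma fsmooth_finv f : fsmooth f -> fsmooth (finv f).
Proof.
move=> Sf n; apply: S_sum => j _; rewrite pspowE.
by apply: fsmoothXn => k /=; apply: SN; case: (k == 0%N).
Qed.

Lemma fsmooth_fcomp f g : fsmooth f -> fsmooth g -> fsmooth (fcomp f g).
Proof. by move=> Sf Sg n; apply: S_sum => k _; apply/SM/fsmoothXn. Qed.

Lemma fsmooth_comp_series a b : fsmooth a -> fsmooth b -> fsmooth (comp_series a b).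
Proof. by move=> Sa Sb; apply/fsmoothM/fsmooth_fcomp/fsmoothM/fsmooth_finv/Sa/fsmoothX. Qed.

Definition fD (f : fps K) := FPS (fun n => D (fcoef f n)).

Lemma fD0 : fD 0 = 0. Proof. by apply: fps_ext => n /=; rewrite D0. Qed.
Lemma fDC c : fD (fC c) = fC (D c). Proof. by apply: fps_ext => -[|n] //=. Qed.
Lemma fDXn k : fD (fX K ^+ k) = 0.
Proof. by apply: fps_ext => n; rewrite /= fcoefXn; case: (n == k). Qed.
Lemma fD1 : fD 1 = 0. Proof. exact: (fDXn 0). Qed.
Lemma fDX : fD (fX K) = 0. Proof. exact: (fDXn 1). Qed.

Lemma fDD f g : fsmooth f -> fsmooth g -> fD (f + g) = fD f + fD g.
Proof. by move=> Sf Sg; apply: fps_ext => n /=; rewrite DD. Qed.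

Lemma fDM f g : fsmooth f -> fsmooth g -> fD (f * g) = fD f * g + f * fD g.
Proof.
move=> Sf Sg; apply: fps_ext => n; rewrite fcoefD !fcoefM /= D_sum => [|i _]; last exact: SM.
by rewrite -big_split; apply: eq_bigr => i _ /=; rewrite DM.
Qed.

Lemma fD_inv f u : fsmooth f -> fsmooth u -> f * u = 1 -> fD u = - (u * u) * fD f.
Proof.
move=> Sf Su fu1; have : fD f * u + f * fD u = 0 by rewrite -fDM // fu1 fD1.
move=> /eqP; rewrite addrC addr_eq0 => /eqP fDu.
by rewrite -[fD u]mul1r -fu1 (mulrC f) -mulrA fDu; ring.
Qed.

Definition fDpoly (q : {poly fps K}) : {poly fps K} := \poly_(i < size q) fD q`_i.

Lemma coef_fDpoly q i : (fDpoly q)`_i = fD q`_i.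
Proof. by rewrite coef_poly; case: ltnP => // qi; rewrite nth_default // fD0. Qed.

Lemma fsmooth_horner (q : {poly fps K}) g :
  (forall i, fsmooth q`_i) -> fsmooth g -> fsmooth q.[g].
Proof.
move=> Sq Sg; rewrite horner_coef; apply: fsmooth_sum => i _.
exact/fsmoothM/fsmoothXn.
Qed.

Lemma fD_horner (q : {poly fps K}) g : (forall i, fsmooth q`_i) -> fsmooth g ->
  fD q.[g] = (fDpoly q).[g] + (q^`()).[g] * fD g.
Proof.
move=> + Sg; elim/poly_ind: q => [|p c IH] Sq.
  by rewrite /fDpoly size_poly0 poly_def big_ord0 deriv0 !horner0 mul0r addr0 fD0.
have Sp i : fsmooth p`_i.
  by have := Sq i.+1; rewrite coefD coefMX coefC /= addr0.
have Sc : fsmooth c by have := Sq 0%N; rewrite coefD coefMX coefC /= add0r.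
have -> : fDpoly (p * 'X + c%:P) = fDpoly p * 'X + (fD c)%:P.
  apply/polyP => -[|i]; rewrite coef_fDpoly !coefD !coefMX !coefC coef_fDpoly /=.
    by rewrite !add0r.
  by rewrite !addr0.
rewrite derivMXaddC !hornerMXaddC hornerD hornerM hornerX fDD ?fDM ?IH //.
- by ring.
- exact: fsmooth_horner.
- exact/fsmoothM/Sg/fsmooth_horner.
Qed.

Lemma fD_fcomp f g : fcoef g 0%N = 0 -> fsmooth f -> fsmooth g ->
  fD (fcomp f g) = fcomp (fD f) g + fcomp (fderiv f) g * fD g.
Proof.
move=> g0 Sf Sg; apply: fps_ext => n.
have Sfpoly i : fsmooth (fpoly n.+2 f)`_i.
  by rewrite coef_poly; case: ifP => _; [exact: fsmoothC | exact: fsmooth0].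
have -> : fcoef (fD (fcomp f g)) n = fcoef (fD (fpoly n.+2 f).[g]) n.
  by apply: (congr1 D); rewrite (fcoef_fpoly_fcomp g0 f (leqnSn n.+1)).
rewrite fD_horner // !fcoefD; congr (_ + _).
  by apply: fcoef_horner_fcomp => // k kn; rewrite coef_fDpoly coef_poly ifT ?fDC //; lia.
apply: fcoefM_eql => i ni; apply: fcoef_horner_fcomp => // k ki.
by rewrite coef_deriv coef_poly ifT -?fCMn //; lia.
Qed.


Definition psi_defect (b d r : fps K) := d * fD b - r * (b - fX K * fderiv b).
Definition phi_defect (a e r : fps K) := e * fD a + r.

Section TwoOfThree.
Variables (a b d e r1 r2 : fps K).
Hypotheses (a0 : fcoef a 0%N = 1) (b0 : fcoef b 0%N = 1) (d0 : fcoef d 0%N = 1).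
Hypotheses (Sa : fsmooth a) (Sb : fsmooth b).
Local Notation A := (finv a).
Local Notation g := (fX K * finv a).
Hypothesis de : a ^+ 2 * fcomp d g = e.
Hypothesis r12 : fcomp r1 g = A ^+ 3 * r2.

Let aA : a * A = 1. Proof. exact: mulr_finv. Qed.
Let SA : fsmooth A. Proof. exact: fsmooth_finv. Qed.
Let g0 : fcoef g 0%N = 0. Proof. by rewrite fcoefXM. Qed.
Let Sg : fsmooth g. Proof. exact/fsmoothM/SA/fsmoothX. Qed.

Lemma fD_comp_series_identity :
  fcomp d g * A ^+ 2 * fD (comp_series a b) =
  A * fcomp (psi_defect b d r1) g +
  A ^+ 4 * (fcomp b g - g * fcomp (fderiv b) g) * phi_defect a e r2.
Proof.
have dA : fD A = - (A * A) * fD a by apply: fD_inv.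
have dg : fD g = fX K * fD A by rewrite fDM ?fDX ?mul0r ?add0r //; exact: fsmoothX.
rewrite /comp_series fDM ?fD_fcomp //; last exact: fsmooth_fcomp.
rewrite /psi_defect fcompB !fcompM // fcompB // fcompM // fcompX // r12.
rewrite /phi_defect -de dg dA.
ring: aA.
Qed.

Lemma two_of_three_defects :
  [/\ psi_defect b d r1 = 0 -> phi_defect a e r2 = 0 -> fD (comp_series a b) = 0,
      psi_defect b d r1 = 0 -> fD (comp_series a b) = 0 -> phi_defect a e r2 = 0 &
      phi_defect a e r2 = 0 -> fD (comp_series a b) = 0 -> psi_defect b d r1 = 0].
Proof.
have A0 : fcoef A 0%N = 1 by exact: fcoef_finv0.
have [] := two_of_three_fcoef0 A0 _ _ fD_comp_series_identity.
- by rewrite fcoef0M fcoefB fcoef0M g0 mul0r subr0 fcoef_fcomp0 // fcoef0X A0 b0 expr1n mulr1.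
- by rewrite !fcoef0M fcoef_fcomp0 // A0 d0 !mulr1.
have psi0 : psi_defect b d r1 = 0 <-> fcomp (psi_defect b d r1) g = 0.
  by split=> [->|/fcomp_eq0]; [exact: fcomp0 | apply=> //; rewrite fcoefXM fcoef_finv0].
by rewrite -!psi0.
Qed.
End TwoOfThree.
End Derivation.

(** * From Laurent series to power series *)

Section LaurentSeries.
Variable K : comNzRingType.
Implicit Types s t : lser K.

Definition fps_of s := FPS (lcoef s).

(* fps_mulX m s is X^m s, a power series as soon as m + lval s >= 0. *)
Definition fps_mulX (m : int) s := FPS (fun k => coef s (k%:Z - m)).

Lemma coef_lt_lval s (n : int) : n < lval s -> coef s n = 0.
Proof. by rewrite /coef; case E: (n - lval s) => [k|k] // nlt; move: E nlt; lia. Qed.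

Lemma coef_lval_add s (k : nat) : coef s (lval s + k%:Z) = lcoef s k.
Proof. by rewrite /coef (addrC (lval s)) addrK. Qed.

Lemma fps_mulXE (m : int) s (k : nat) :
  k%:Z = m + lval s -> fps_mulX m s = fX K ^+ k * fps_of s.
Proof.
move=> km; apply: fps_ext => n; rewrite fcoefXnM /fps_mulX /=.
case: (leqP k n) => kn; last by apply: coef_lt_lval; lia.
have -> : n%:Z - m = lval s + (n - k)%N%:Z by lia.
exact: coef_lval_add.
Qed.

Lemma lseq_fps_mulX (m : int) s t (k l : nat) :
  k%:Z = m + lval s -> l%:Z = m + lval t ->
  lseq s t <-> fps_mulX m s = fps_mulX m t.
Proof.
move=> km lm; split=> [st|st n]; first by apply: fps_ext => n /=; rewrite st.
case: (lerP 0 (n + m)) => nm; last by rewrite !coef_lt_lval //; lia.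
have [k' ->] : exists k' : nat, n = k'%:Z - m.
  by exists (absz (n + m)); rewrite gez0_abs // addrK.
by have := congr1 (fun f => fcoef f k') st.
Qed.

Lemma coef_ladd s t (n : int) : coef (ladd s t) n = coef s n + coef t n.
Proof.
rewrite /ladd; set v := (if _ then _ else _).
have [vs vt] : v <= lval s /\ v <= lval t by rewrite /v; case: ifP => st; lia.
clearbody v; case: (lerP v n) => vn; last by rewrite !coef_lt_lval ?addr0 //; lia.
have -> : n = v + (absz (n - v))%:Z by rewrite gez0_abs ?subr_ge0 // addrCA subrr addr0.
exact: (coef_lval_add (LS v _)).
Qed.

Lemma coef_lopp s (n : int) : coef (lopp s) n = - coef s n.
Proof. by rewrite /coef /=; case: (n - lval s) => // k; rewrite oppr0. Qed.

Lemma coef_lscale c s (n : int) : coef (lscale c s) n = c * coef s n.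
Proof. by rewrite /coef /=; case: (n - lval s) => // k; rewrite mulr0. Qed.

Lemma fps_mulX_ladd m s t : fps_mulX m (ladd s t) = fps_mulX m s + fps_mulX m t.
Proof. by apply: fps_ext => k; rewrite fcoefD /= coef_ladd. Qed.

Lemma fps_mulX_lopp m s : fps_mulX m (lopp s) = - fps_mulX m s.
Proof. by apply: fps_ext => k; rewrite fcoefN /= coef_lopp. Qed.

Lemma fps_mulX_lsub m s t : fps_mulX m (lsub s t) = fps_mulX m s - fps_mulX m t.
Proof. by rewrite /lsub fps_mulX_ladd fps_mulX_lopp. Qed.

Lemma fps_mulX_lscale m c s : fps_mulX m (lscale c s) = fC c * fps_mulX m s.
Proof. by apply: fps_ext => k; rewrite fcoefCM /= coef_lscale. Qed.

Lemma fps_mulX_lmapc m (D : K -> K) s :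
  D 0 = 0 -> fps_mulX m (lmapc D s) = fD D (fps_mulX m s).
Proof. by move=> D0; apply: fps_ext => k; rewrite /= /coef /=; case: (_ - _). Qed.

Lemma fps_mulX_lmul m m1 m2 s t (k1 k2 : nat) : m = m1 + m2 ->
  k1%:Z = m1 + lval s -> k2%:Z = m2 + lval t ->
  fps_mulX m (lmul s t) = fps_mulX m1 s * fps_mulX m2 t.
Proof.
move=> -> k1m k2m; rewrite (fps_mulXE k1m) (fps_mulXE k2m) (@fps_mulXE _ _ (k1 + k2)).
  by rewrite exprD (_ : fps_of (lmul s t) = fps_of s * fps_of t) //; ring.
by rewrite PoszD k1m k2m /=; ring.
Qed.

Lemma fps_mulX_lX m n (k : nat) : k%:Z = m + n -> fps_mulX m (lX K n) = fX K ^+ k.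
Proof. by move=> km; rewrite (@fps_mulXE m (lX K n) k km) mulr1. Qed.

Lemma fps_mulX_lconst m c (k : nat) : k%:Z = m -> fps_mulX m (lconst c) = fX K ^+ k * fC c.
Proof. by move=> km; rewrite (@fps_mulXE _ _ k) // addr0. Qed.

Lemma fps_mulX_linv m s (k : nat) :
  k%:Z = m - lval s -> fps_mulX m (linv_monic s) = fX K ^+ k * finv (fps_of s).
Proof. exact: (@fps_mulXE m (linv_monic s) k). Qed.

Lemma fps_mulX_lpow m s n (k : nat) :
  k%:Z = m + n%:Z * lval s -> fps_mulX m (lpow s n) = fX K ^+ k * fps_of s ^+ n.
Proof.
have lval_lpow : lval (lpow s n) = n%:Z * lval s.
  by elim: n => [|n IH] /=; rewrite ?mul0r // IH intS mulrDl mul1r.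
have fps_of_lpow : fps_of (lpow s n) = fps_of s ^+ n.
  by elim: n {lval_lpow} => [|n IH] //; rewrite exprS -IH.
by move=> km; rewrite (fps_mulXE (s := lpow s n) (k := k)) ?fps_of_lpow ?lval_lpow.
Qed.

Lemma fps_of_lcomp f g : lval f = -1 -> lval g = 1 ->
  fps_of (lcomp f g) =
  fC (lcoef f 0%N) * finv (fps_of g) + fX K * fcomp (fshift (fps_of f)) (fX K * fps_of g).
Proof.
move=> f1 g1; apply: fps_ext => j; rewrite fcoefD fcoefCM fcoefXM /= f1 big_ord_recl /=.
congr (_ + _).
  have -> : coef (lmul (linv_monic g) (lone K)) (-1 + j%:Z) =
      fcoef (fps_mulX 1 (lpow (linv_monic g) 1)) j by rewrite /= addrC.
  by rewrite (@fps_mulX_lpow _ _ _ 0) ?expr1 ?mul1r //= g1.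
case: j => [|j]; first by rewrite big_ord0.
apply: eq_bigr => k _; rewrite /bump /= add1n subn1 /=; congr (_ * _).
have -> : coef (lpow g k) (-1 + j.+1%:Z) = fcoef (fps_mulX 1 (lpow g k)) j.+1.
  by rewrite /= addrC.
rewrite (@fps_mulX_lpow _ _ _ k.+1); last by rewrite g1; lia.
by rewrite exprS -mulrA fcoefXM exprMn.
Qed.
End LaurentSeries.

(** * Coverings of the Gibbons-Tsarev equation *)

Section GibbonsTsarevCovering.
Variables (R : realType) (W : pointedType).
Variables (smooth : (W -> R) -> Prop) (Dx Dy : (W -> R) -> (W -> R)) (z zx zy : W -> R).
Hypothesis GT : GT_covering smooth Dx Dy z zx zy.
Variables (psi phi : nat -> W -> R).
Hypothesis Spsi : forall k, (0 < k)%N -> smooth (psi k).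
Hypothesis Sphi : forall k, (0 < k)%N -> smooth (phi k).

Let Sconst (c : R) : smooth (fun _ => c). Proof. by case: GT => + _ _ _ _; apply. Qed.
Let S1 : smooth 1. Proof. exact: Sconst. Qed.
Let SD f g : smooth f -> smooth g -> smooth (f + g).
Proof. by case: GT => _ + _ _ _ Sf Sg => /(_ f g Sf Sg) []. Qed.
Let SN f : smooth f -> smooth (- f).
Proof. by case: GT => _ + _ _ _ Sf => /(_ f f Sf Sf) []. Qed.
Let SM f g : smooth f -> smooth g -> smooth (f * g).
Proof. by case: GT => _ + _ _ _ Sf Sg => /(_ f g Sf Sg) []. Qed.
Let derDx : is_derivation smooth Dx. Proof. by case: GT => _ _ []. Qed.
Let derDy : is_derivation smooth Dy. Proof. by case: GT => _ _ []. Qed.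

Local Notation X := (fX (W -> R)).
Local Notation ps := (psiS psi).
Local Notation ph := (phiS phi).
Local Notation a := (fps_of ph).
Local Notation b := (fps_of ps).
Local Notation g := (X * finv a).
(* [d] and [e] are the denominators of conditions (1) and (2) multiplied by X^2,
   in the variable of psi and of phi respectively; [r1y] and [r2y] carry the
   extra factor lambda - z_x of the D_y equations. *)
Local Notation d := (1 - fC zx * X - fC zy * X ^+ 2).
Local Notation e := (a ^+ 2 - fC zx * X * a - fC zy * X ^+ 2).
Local Notation r1y := (X ^+ 2 * (1 - fC zx * X)).
Local Notation r2y := (X ^+ 2 * (a - fC zx * X)).

Let a0 : fcoef a 0%N = 1. Proof. by []. Qed.
Let aA : a * finv a = 1. Proof. exact: mulr_finv. Qed.
Let g0 : fcoef g 0%N = 0. Proof. by rewrite fcoefXM. Qed.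

Let Sa : fsmooth smooth a.
Proof. by move=> [|[|n]] //=; [exact: (Sconst 0) | exact: Sphi]. Qed.
Let Sb : fsmooth smooth b.
Proof. by move=> [|[|n]] //=; [exact: (Sconst 0) | exact: Spsi]. Qed.

Let d0 : fcoef d 0%N = 1.
Proof. by rewrite !fcoefB !fcoefCM fcoef0X fcoef1 /= expr0n !mulr0 !subr0. Qed.

Let de : a ^+ 2 * fcomp d g = e.
Proof. by rewrite !fcompB // !fcompM // !fcompC // fcompX // fC1; ring: aA. Qed.

Lemma derivation_two_of_three D r1 r2 :
  is_derivation smooth D -> fcomp r1 g = finv a ^+ 3 * r2 ->
  [/\ psi_defect D b d r1 = 0 -> phi_defect D a e r2 = 0 -> fD D (comp_series a b) = 0,
      psi_defect D b d r1 = 0 -> fD D (comp_series a b) = 0 -> phi_defect D a e r2 = 0 &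
      phi_defect D a e r2 = 0 -> fD D (comp_series a b) = 0 -> psi_defect D b d r1 = 0].
Proof. by case=> _ _ DD DM r12; apply: (two_of_three_defects S1 SD SN SM DD DM). Qed.

Lemma fcomp_r1x : fcomp (X ^+ 3) g = finv a ^+ 3 * X ^+ 3.
Proof. by rewrite fcompXn //; ring. Qed.

Lemma fcomp_r1y : fcomp r1y g = finv a ^+ 3 * r2y.
Proof.
by rewrite fcompM // !fcompXn // fcompB // fcomp1 // fcompM // fcompC // fcompX //; ring: aA.
Qed.

Local Notation den1 := (ladd (lX _ (-2)) (ladd (lscale (- zx) (lX _ (-1))) (lconst (- zy)))).
Local Notation den := (ladd (lmul ph ph) (ladd (lscale (- zx) ph) (lconst (- zy)))).

Let Dx0 : Dx 0 = 0. Proof. by case: derDx => _ + _ _; apply. Qed.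
Let Dy0 : Dy 0 = 0. Proof. by case: derDy => _ + _ _; apply. Qed.

Let e0 : fcoef e 0%N = 1.
Proof. by rewrite !fcoefB !fcoef0M a0 /= !(mulr0, mul0r, mulr1, subr0). Qed.

Lemma fps_of_den1 : fps_of den1 = d.
Proof.
rewrite -[fps_of _]mul1r -(expr0 X) -(@fps_mulXE _ 2) // !fps_mulX_ladd.
rewrite (fps_mulX_lX (k := 0) _) // fps_mulX_lscale (fps_mulX_lX (k := 1) _) //.
by rewrite (fps_mulX_lconst (k := 2) _) // !fCN; ring.
Qed.

Lemma fps_of_den : fps_of den = e.
Proof.
rewrite -[fps_of _]mul1r -(expr0 X) -(@fps_mulXE _ 2) // !fps_mulX_ladd.
rewrite (fps_mulX_lmul (m1 := 1) (m2 := 1) (k1 := 0) (k2 := 0) _) // fps_mulX_lscale.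
rewrite (@fps_mulXE _ 1 ph 0) // (@fps_mulXE _ 2 ph 1) // (fps_mulX_lconst (k := 2) _) //.
by rewrite !fCN; ring.
Qed.

Lemma fps_mulX_dlam_psi : fps_mulX 0 (dlam ps) = b - X * fderiv b.
Proof.
rewrite fps_mulX_lopp (fps_mulX_lmul (m1 := -2) (m2 := 2) (k1 := 0) (k2 := 0) _) //.
rewrite (fps_mulX_lX (k := 0) _) // (@fps_mulXE _ 2 _ 0) // !expr0 !mul1r.
apply: fps_ext => -[|n]; rewrite fcoefN fcoefB fcoefXM /=; first by rewrite mulrN1z opprK subr0.
have -> : -1 + n.+1%:Z = n by lia.
by rewrite /= mulrSr pmulrn; ring.
Qed.

Lemma cond1E : cond1 Dx Dy zx zy psi <->
  psi_defect Dx b d (X ^+ 3) = 0 /\ psi_defect Dy b d r1y = 0.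
Proof.
rewrite /cond1; cbv zeta.
rewrite (lseq_fps_mulX (m := 1) (k := 0) (l := 3) _) // (lseq_fps_mulX (m := 1) (k := 0) (l := 2) _) //.
rewrite !fps_mulX_lmapc // (@fps_mulXE _ 1 ps 0) // mul1r.
rewrite (fps_mulX_lmul (m1 := 0) (m2 := 1) (k1 := 0) (k2 := 3) _) // fps_mulX_dlam_psi.
rewrite (fps_mulX_lmul (m1 := 1) (m2 := 0) (k1 := 0) (k2 := 2) _) //.
rewrite (fps_mulX_lmul (m1 := 1) (m2 := 0) (k1 := 0) (k2 := 0) _) // fps_mulX_dlam_psi fps_mulX_lsub.
rewrite (fps_mulX_lX (k := 0) _) // (fps_mulX_lconst (k := 1) _) //.
rewrite !(fps_mulX_linv (m := 1) (k := 3) _) // !(fps_mulX_linv (m := 0) (k := 2) _) // fps_of_den1.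
have -> : (b - X * fderiv b) * (X ^+ 3 * finv d) = X ^+ 3 * (b - X * fderiv b) * finv d.
  by ring.
have -> : (X ^+ 0 - X ^+ 1 * fC zx) * (b - X * fderiv b) * (X ^+ 2 * finv d) =
    r1y * (b - X * fderiv b) * finv d by ring.
by rewrite !(eq_mul_finv _ _ d0).
Qed.

Lemma cond2E : cond2 Dx Dy zx zy phi <->
  phi_defect Dx a e (X ^+ 3) = 0 /\ phi_defect Dy a e r2y = 0.
Proof.
rewrite /cond2; cbv zeta.
rewrite (lseq_fps_mulX (m := 1) (k := 0) (l := 3) _) // (lseq_fps_mulX (m := 1) (k := 0) (l := 2) _) //.
rewrite !fps_mulX_lopp !fps_mulX_lmapc // (@fps_mulXE _ 1 ph 0) // mul1r.
rewrite (fps_mulX_lmul (m1 := 1) (m2 := 0) (k1 := 0) (k2 := 2) _) // fps_mulX_lsub.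
rewrite (@fps_mulXE _ 1 ph 0) // mul1r (fps_mulX_lconst (k := 1) _) //.
rewrite (fps_mulX_linv (m := 1) (k := 3) _) // (fps_mulX_linv (m := 0) (k := 2) _) // fps_of_den.
have -> : - (X ^+ 3 * finv e) = - X ^+ 3 * finv e by ring.
have -> : - ((a - X ^+ 1 * fC zx) * (X ^+ 2 * finv e)) = - r2y * finv e by ring.
by rewrite !(eq_mul_finv _ _ e0) !opprK.
Qed.

Lemma fps_of_psi_comp_phi : fps_of (lcomp ps (linv_monic ph)) = comp_series a b.
Proof.
rewrite fps_of_lcomp // (_ : fps_of (linv_monic ph) = finv a) // finvK //.
rewrite /comp_series [in RHS](fshiftE b) fcompD // fcompC // fcompM // fcompX // fC1.
by ring: aA.
Qed.

Hypothesis connected : diff_connected smooth Dx Dy.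

Lemma cond3E : cond3 psi phi <->
  fD Dx (comp_series a b) = 0 /\ fD Dy (comp_series a b) = 0.
Proof.
have coefC k : coef (lcomp ps (linv_monic ph)) (-1 + k%:Z) = fcoef (comp_series a b) k.
  by rewrite -fps_of_psi_comp_phi; exact: (coef_lval_add (lcomp ps _) k).
split=> [C_const|[DxC DyC] n].
  have fD_C D : is_derivation smooth D -> fD D (comp_series a b) = 0.
    case=> _ Dconst _ _; apply: fps_ext => k; have [c cE] := C_const (-1 + k%:Z).
    by change (D (fcoef (comp_series a b) k) = 0); rewrite -coefC cE Dconst.
  by split; apply: fD_C.
case: (ltrP n (-1)) => [n_small|n_large]; first by exists 0; rewrite coef_lt_lval.
have -> : n = -1 + (absz (n + 1))%:Z by rewrite gez0_abs; lia.
rewrite coefC; apply: connected.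
- by apply: (fsmooth_comp_series S1 SD SN SM).
- exact: (congr1 (fun f => fcoef f (absz (n + 1))) DxC).
- exact: (congr1 (fun f => fcoef f (absz (n + 1))) DyC).
Qed.

Lemma two_of_three_conditions :
  [/\ cond1 Dx Dy zx zy psi -> cond2 Dx Dy zx zy phi -> cond3 psi phi,
      cond1 Dx Dy zx zy psi -> cond3 psi phi -> cond2 Dx Dy zx zy phi &
      cond2 Dx Dy zx zy phi -> cond3 psi phi -> cond1 Dx Dy zx zy psi].
Proof.
have [x12 x13 x23] := derivation_two_of_three derDx fcomp_r1x.
have [y12 y13 y23] := derivation_two_of_three derDy fcomp_r1y.
split.
- by move=> /cond1E[? ?] /cond2E[? ?]; apply/cond3E; split; [apply: x12 | apply: y12].
- by move=> /cond1E[? ?] /cond3E[? ?]; apply/cond2E; split; [apply: x13 | apply: y13].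
- by move=> /cond2E[? ?] /cond3E[? ?]; apply/cond1E; split; [apply: x23 | apply: y23].
Qed.

End GibbonsTsarevCovering.

Lemma funs_on_empty_eq (W T : Type) (f g : W -> T) : ~ inhabited W -> f = g.
Proof. by move=> W0; apply: funext => w; case: W0. Qed.

Theorem mainTheorem10 (R : realType) (W : Type)
    (smooth : (W -> R) -> Prop) (Dx Dy : (W -> R) -> (W -> R))
    (z zx zy : W -> R) (psi phi : nat -> W -> R) :
  GT_covering smooth Dx Dy z zx zy ->
  diff_connected smooth Dx Dy ->
  (forall k, (0 < k)%N -> smooth (psi k)) ->
  (forall k, (0 < k)%N -> smooth (phi k)) ->
  [/\ cond1 Dx Dy zx zy psi -> cond2 Dx Dy zx zy phi -> cond3 psi phi,
      cond1 Dx Dy zx zy psi -> cond3 psi phi -> cond2 Dx Dy zx zy phi &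
      cond2 Dx Dy zx zy phi -> cond3 psi phi -> cond1 Dx Dy zx zy psi].
Proof.
move=> GT connected Spsi Sphi.
have [[w0]|W0] := pselect (inhabited W).
  pose Wp : pointedType :=
    HB.pack_for pointedType W (isPointed.Build W w0) (gen_eqMixin W) (gen_choiceMixin W).
  exact: (@two_of_three_conditions R Wp smooth Dx Dy z zx zy GT psi phi Spsi Sphi connected).
split=> _ _; first by move=> n; exists 0; exact: funs_on_empty_eq.
  by split=> n; exact: funs_on_empty_eq.
by split=> n; exact: funs_on_empty_eq.
Qed.
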